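(* Let $\mathcal{A} = (Q, \Sigma, M, \alpha, \eta)$ be an $\mathbb{R}$-IFA. Then $L(\mathcal{A})$ is a regular language, and there is a deterministic finite automaton $\mathcal{B}$ with at most $2^{|Q|}$ states such that $L(\mathcal{B}) = L(\mathcal{A})$.
   Context: An $\mathbb{R}$-weighted automaton $\mathcal{A} = (Q, \Sigma, M, \alpha, \eta)$ consists of a finite set of states $Q$, a finite alphabet $\Sigma$, a map $M : \Sigma \to \mathbb{R}^{Q \times Q}$, an initial row vector $\alpha \in \mathbb{R}^Q$ and a final column vector $\eta \in \mathbb{R}^Q$. $M$ is extended to $\Sigma^*$ by $M(a_1\cdots a_k) = M(a_1)\cdots M(a_k)$ (and $M(\varepsilon)$ the identity), and $L_\mathcal{A}(w) = \alpha M(w) \eta$ for $w \in \Sigma^*$. $\mathcal{A}$ is an $\mathbb{R}$-IFA (image-binary finite automaton) if $L_\mathcal{A}(w) \in \{0,1\}$ for all $w \in \Sigma^*$; it then defines the language $L(\mathcal{A}) = \{w \in \Sigma^* \mid L_\mathcal{A}(w) = 1\}$. *)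

From HB Require Import structures.
From mathcomp Require Import all_boot all_order all_algebra.
From mathcomp Require Import reals.
Set Implicit Arguments. Unset Strict Implicit. Unset Printing Implicit Defensive.
Import Order.TTheory GRing.Theory Num.Theory.
Local Open Scope ring_scope.

(* An R-weighted automaton with state set 'I_n (so |Q| = n), alphabet a
   finType Sigma, transition matrices M a, initial row vector alpha and
   final column vector eta. *)
Record wautomaton (R : realType) (Sigma : finType) (n : nat) := WAutomaton {
  wa_M : Sigma -> 'M[R]_n;
  wa_alpha : 'rV[R]_n;
  wa_eta : 'cV[R]_n }.

Definition wa_Mword (R : realType) (Sigma : finType) (n : nat)
  (A : wautomaton R Sigma n) (w : seq Sigma) : 'M[R]_n :=
  foldr (fun a N => wa_M A a *m N) 1%:M w.

Definition wa_weight (R : realType) (Sigma : finType) (n : nat)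
  (A : wautomaton R Sigma n) (w : seq Sigma) : R :=
  (wa_alpha A *m wa_Mword A w *m wa_eta A) ord0 ord0.

Definition is_IFA (R : realType) (Sigma : finType) (n : nat)
  (A : wautomaton R Sigma n) : Prop :=
  forall w : seq Sigma, wa_weight A w = 0 \/ wa_weight A w = 1.

Definition wa_lang (R : realType) (Sigma : finType) (n : nat)
  (A : wautomaton R Sigma n) : seq Sigma -> Prop :=
  fun w => wa_weight A w = 1.

Record dfa (Sigma : finType) := DFA {
  dfa_state : finType;
  dfa_start : dfa_state;
  dfa_delta : dfa_state -> Sigma -> dfa_state;
  dfa_final : {set dfa_state} }.

Definition dfa_run (Sigma : finType) (B : dfa Sigma) (q : dfa_state B)
  (w : seq Sigma) : dfa_state B := foldl (dfa_delta (d:=B)) q w.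

Definition dfa_lang (Sigma : finType) (B : dfa Sigma) : seq Sigma -> Prop :=
  fun w => dfa_run (dfa_start B) w \in dfa_final B.

Definition regular (Sigma : finType) (L : seq Sigma -> Prop) : Prop :=
  exists B : dfa Sigma, forall w, L w <-> dfa_lang B w.

From mathcomp Require Import all_boot all_order all_algebra reals.
From Stdlib Require Import Classical.
Set Implicit Arguments. Unset Strict Implicit. Unset Printing Implicit Defensive.
Import Order.TTheory GRing.Theory Num.Theory.
Local Open Scope ring_scope.

(* The weight of [w u] is the scalar product of the left vector [alpha M(w)]
   with the right vector [M(u) eta], so it is linear in the right vector.
   Finitely many words [g_1, ..., g_k], [k <= |Q|], have right vectors
   spanning those of all words; hence the 0/1 vector [(L(w g_j))_j] determines
   [L(w u)] for every [u]. These bit vectors are the states of a DFA: reading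
   [a] from the state of [w] computes the state of [w a], and [w] is accepted
   iff the state determines [L(w) = 1]. *)

Section SpanningFamily.
Variables (F : fieldType) (T : Type) (n : nat) (v : T -> 'rV[F]_n).

Definition family_mx k (t : 'I_k -> T) : 'M[F]_(k, n) := \matrix_i v (t i).

Lemma family_mx_sub k (t : 'I_k -> T) i : (v (t i) <= family_mx t)%MS.
Proof. by rewrite -[v (t i)](rowK (fun i => v (t i))) row_sub. Qed.

Lemma family_mx_cons_rank k (t : 'I_k -> T) x :
    \rank (family_mx t) = k -> ~~ (v x <= family_mx t)%MS ->
  \rank (family_mx (fun i : 'I_k.+1 => oapp t x (unlift ord0 i))) = k.+1.
Proof.
set X := family_mx t; set X' := family_mx _ => rkX vxNX.
have X_lt : (X < X + v x)%MS by rewrite ltmxE addsmxSl addsmx_sub submx_refl.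
have X'_ge : (X + v x <= X')%MS.
  rewrite addsmx_sub; apply/andP; split.
    apply/row_subP => i; rewrite rowK.
    have -> : t i = oapp t x (unlift ord0 (lift ord0 i)) by rewrite liftK.
    exact: family_mx_sub.
  have -> : x = oapp t x (unlift ord0 ord0) by rewrite unlift_none.
  exact: family_mx_sub.
apply/eqP; rewrite eqn_leq rank_leq_row -[X in (X < _)%N]rkX.
exact: leq_trans (rank_ltmx X_lt) (mxrankS X'_ge).
Qed.

Lemma exists_spanning_family :
  exists k (t : 'I_k -> T), (k <= n)%N /\ forall x, (v x <= family_mx t)%MS.
Proof.
apply: NNPP => no_span.
have full_rank m : exists t : 'I_m -> T, \rank (family_mx t) = m.
  elim: m => [|m [t rk_t]].
    have t0 : 'I_0 -> T by case.
    by exists t0; apply/eqP; rewrite -leqn0 rank_leq_row.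
  have m_le_n : (m <= n)%N by rewrite -rk_t rank_leq_col.
  have [x vxNt] : exists x, ~~ (v x <= family_mx t)%MS.
    apply: NNPP => all_in; apply: no_span; exists m, t; split => // x.
    by apply: contra_notT all_in => vxNt; exists x.
  by exists (fun i => oapp t x (unlift ord0 i)); exact: family_mx_cons_rank.
have [t rk_t] := full_rank n.+1.
by have := rank_leq_col (family_mx t); rewrite rk_t ltnn.
Qed.

End SpanningFamily.

Section WeightedAutomaton.
Variables (R : realType) (Sigma : finType) (n : nat) (A : wautomaton R Sigma n).
Local Notation Mw := (wa_Mword A).
Local Notation L := (wa_weight A).

Lemma wa_Mword_cat w u : Mw (w ++ u) = Mw w *m Mw u.
Proof.
elim: w => [|a w IHw]; first by rewrite mul1mx.
by rewrite /wa_Mword /= -!/(wa_Mword A _) IHw mulmxA.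
Qed.

(* Transposed, since [mxalgebra] spans row spaces. *)
Definition wa_rvec u : 'rV[R]_n := (Mw u *m wa_eta A)^T.

Lemma wa_weight_cat w u :
  L (w ++ u) = (wa_alpha A *m Mw w *m (wa_rvec u)^T) 0 0.
Proof. by rewrite /wa_weight /wa_rvec trmxK wa_Mword_cat !mulmxA. Qed.

Variables (k : nat) (g : 'I_k -> seq Sigma).

Definition wa_coef u : 'rV[R]_k := wa_rvec u *m pinvmx (family_mx wa_rvec g).

Lemma wa_weight_cat_comb w u : (wa_rvec u <= family_mx wa_rvec g)%MS ->
  L (w ++ u) = \sum_j L (w ++ g j) * wa_coef u 0 j.
Proof.
move=> /mulmxKpV u_comb.
rewrite wa_weight_cat -u_comb -/(wa_coef u) trmx_mul mulmxA mxE.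
apply: eq_bigr => j _; rewrite wa_weight_cat !mxE; congr (_ * _).
by apply: eq_bigr => l _; rewrite !mxE.
Qed.

Definition signature_accepts (s : {ffun 'I_k -> bool}) u : bool :=
  \sum_j ((s j)%:R : R) * wa_coef u 0 j == 1.

Definition wa_signature w : {ffun 'I_k -> bool} := [ffun j => L (w ++ g j) == 1].

Definition ifa_dfa : dfa Sigma :=
  DFA (wa_signature [::]) (fun s a => [ffun i => signature_accepts s (a :: g i)])
    [set s | signature_accepts s [::]].

Lemma card_ifa_dfa : #|dfa_state ifa_dfa| = (2 ^ k)%N.
Proof. by rewrite card_ffun card_bool card_ord. Qed.

Hypothesis A_IFA : is_IFA A.
Hypothesis g_span : forall u, (wa_rvec u <= family_mx wa_rvec g)%MS.

Lemma wa_weight_boolE w : ((L w == 1)%:R : R) = L w.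
Proof. by case: (A_IFA w) => ->; rewrite ?eqxx // eq_sym oner_eq0. Qed.

Lemma signature_acceptsE w u :
  signature_accepts (wa_signature w) u = (L (w ++ u) == 1).
Proof.
rewrite /signature_accepts (wa_weight_cat_comb w (g_span u)).
by under eq_bigr => j _ do rewrite ffunE wa_weight_boolE.
Qed.

Lemma ifa_dfa_run w : dfa_run (dfa_start ifa_dfa) w = wa_signature w.
Proof.
elim/last_ind: w => [//|w a IHw].
rewrite /dfa_run foldl_rcons -/(dfa_run _ w) IHw.
by apply/ffunP => i; rewrite !ffunE signature_acceptsE cat_rcons.
Qed.

Lemma ifa_dfa_lang w : dfa_lang ifa_dfa w <-> wa_lang A w.
Proof.
rewrite /dfa_lang ifa_dfa_run inE signature_acceptsE cats0.
by split => [/eqP|->].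
Qed.

End WeightedAutomaton.

Theorem theorem1 (R : realType) (Sigma : finType) (n : nat)
  (A : wautomaton R Sigma n) :
  is_IFA A ->
  regular (wa_lang A) /\
  exists B : dfa Sigma,
    (#|dfa_state B| <= 2 ^ n)%N /\ (forall w, dfa_lang B w <-> wa_lang A w).
Proof.
move=> A_IFA.
have [k [g [k_le_n g_span]]] := exists_spanning_family (wa_rvec A).
have B_lang := ifa_dfa_lang A_IFA g_span.
split; first by exists (ifa_dfa A g) => w; rewrite B_lang.
by exists (ifa_dfa A g); rewrite card_ifa_dfa leq_exp2l.
Qed.
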